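(* For every real number $L>0$, $$\mathcal L\left(e^{-L}\right)=\sum_{k=2}^{\infty}\mathcal L\left(\frac{\sinh^2(L/2)}{\sinh^2(kL/2)}\right).$$
   Context: $\mathcal L$ denotes the Rogers dilogarithm: for real $z\le 1$, $\mathcal L(z)=\mathrm{Li}_2(z)+\tfrac12\log|z|\log(1-z)$ (with $\mathcal L(0)=0$, $\mathcal L(1)=\pi^2/6$), where $\mathrm{Li}_2(z)=\sum_{m\ge1}z^m/m^2=-\int_0^z\frac{\log(1-t)}{t}\,dt$. *)

From Stdlib Require Import Reals Lra ClassicalEpsilon.
Open Scope R_scope.

(* The series
   converges for |z| <= 1, which covers every argument used in theorem1
   (all lie in (0,1)).  The limit is selected by the (classical) epsilon
   operator; since limits are unique, for |z| <= 1 this is exactly Li2 z. *)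
Definition Li2_partial (z : R) (n : nat) : R :=
  sum_f_R0 (fun m => z ^ (S m) / (INR (S m))^2) n.

Definition Li2 (z : R) : R :=
  epsilon (inhabits 0) (fun l => Un_cv (Li2_partial z) l).

Definition Rogers (z : R) : R :=
  if Req_EM_T z 0 then 0
  else if Req_EM_T z 1 then PI ^ 2 / 6
  else Li2 z + / 2 * ln (Rabs z) * ln (1 - z).

From Stdlib Require Import Reals Lra Psatz ClassicalEpsilon.
From Coquelicot Require Import Coquelicot.
Open Scope R_scope.

(* On (0,1) the Rogers dilogarithm coincides with the smooth function
   R t = rogers01 t = Li2 t + 1/2 ln t ln(1-t), with Li2 the power series
   sum_{m>=1} t^m/m^2; its derivative is -1/2 (ln(1-t)/t + ln t/(1-t)) and
   rogers01 t -> 0 as t -> 0+.  A function with zero derivative on an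
   interval is constant, which gives Euler's reflection formula
   (rogers01 x + rogers01 (1-x) is constant) and Abel's five-term relation
     R(x) + R(y) = R(xy) + R(x(1-y)/(1-xy)) + R(y(1-x)/(1-xy))
   (the constant is found by letting x -> 0).
   With q = e^{-L}, X_m = q^m(1-q)/(1-q^{m+1}), Y_m = (1-q)/(1-q^{m+1}),
   the five-term relation at (X_m, Y_m) reads
     R(X_m) + R(Y_m) = R(X_m Y_m) + R(X_{m+1}) + R(Y_{m+1}),
   and X_{k-1} Y_{k-1} = sinh^2(L/2)/sinh^2(kL/2).  Hence the partial sums
   telescope to R(X_1) + R(Y_1) - R(X_{n+2}) - R(Y_{n+2}); since
   X_1 + Y_1 = 1, the reflection formula turns the first two terms into
   R(q) + R(1-q), while X_m -> 0 and Y_m -> 1-q, so the limit is R(q). *)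

Lemma ex_derive_continuity_pt (f : R -> R) (x : R) :
  ex_derive f x -> continuity_pt f x.
Proof. intros H. apply continuity_pt_filterlim. apply (ex_derive_continuous f x H). Qed.

Lemma derive_zero_const (f : R -> R) (a b : R) :
  (forall t, a < t < b -> is_derive f t 0) ->
  forall x y, a < x < b -> a < y < b -> f x = f y.
Proof.
  intros Hd x y Hx Hy.
  assert (Hin : forall t, Rmin x y <= t <= Rmax x y -> a < t < b).
  { intros t Ht. split.
    - apply Rlt_le_trans with (Rmin x y); [apply Rmin_glb_lt|]; lra.
    - apply Rle_lt_trans with (Rmax x y); [|apply Rmax_lub_lt]; lra. }
  destruct (MVT_gen f x y (fun _ => 0)) as [c [_ Hc]].
  - intros t Ht. apply Hd, Hin. lra.
  - intros t Ht. apply ex_derive_continuity_pt. exists 0. apply Hd, Hin, Ht.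
  - lra.
Qed.

Lemma CV_radius_bounded_coef (a : nat -> R) :
  (forall n, Rabs (a n) <= 1) ->
  forall x, Rabs x < 1 -> Rbar_lt (Rabs x) (CV_radius a).
Proof.
  intros Ha x Hx.
  destruct (CV_radius_bounded a) as [Hub _].
  assert (H1 : Rbar_le 1 (CV_radius a)).
  { apply Hub. exists 1. intro n. rewrite pow1, Rmult_1_r. apply Ha. }
  destruct (CV_radius a) as [r| |]; simpl in *; lra.
Qed.

Lemma INR_S_ge_1 (n : nat) : 1 <= INR (S n).
Proof. rewrite S_INR. pose proof (pos_INR n). lra. Qed.

Lemma Rabs_inv_le_1 (x : R) : 1 <= x -> Rabs (/ x) <= 1.
Proof.
  intros Hx. rewrite Rabs_right.
  - rewrite <- Rinv_1. apply Rinv_le_contravar; lra.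
  - left. apply Rinv_0_lt_compat. lra.
Qed.

(* Coefficients of -ln(1-t)/t = sum_{m>=0} t^m/(m+1) and of
   Li2 t = sum_{m>=1} t^m/m^2. *)
Definition log_quot_coef (n : nat) : R := / INR (S n).
Definition li2_coef : nat -> R := PS_incr_1 (fun n => / INR (S n) ^ 2).

Lemma log_quot_coef_radius (x : R) :
  Rabs x < 1 -> Rbar_lt (Rabs x) (CV_radius log_quot_coef).
Proof.
  apply CV_radius_bounded_coef. intro n. apply Rabs_inv_le_1, INR_S_ge_1.
Qed.

Lemma log_coef_radius (x : R) :
  Rabs x < 1 -> Rbar_lt (Rabs x) (CV_radius (PS_incr_1 log_quot_coef)).
Proof. rewrite CV_radius_incr_1. apply log_quot_coef_radius. Qed.

Lemma li2_coef_radius (x : R) :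
  Rabs x < 1 -> Rbar_lt (Rabs x) (CV_radius li2_coef).
Proof.
  unfold li2_coef. rewrite CV_radius_incr_1. apply CV_radius_bounded_coef.
  intro n. apply Rabs_inv_le_1. pose proof (INR_S_ge_1 n). nra.
Qed.

Lemma Li2_PSeries (z : R) : Rabs z < 1 -> Li2 z = PSeries li2_coef z.
Proof.
  intros Hz.
  assert (Hs : is_series (fun k => li2_coef k * z ^ k) (PSeries li2_coef z)).
  { apply is_pseries_R, PSeries_correct, CV_radius_inside, li2_coef_radius, Hz. }
  assert (Hs1 : is_series (fun k => li2_coef (S k) * z ^ S k) (PSeries li2_coef z)).
  { apply (is_series_incr_1 (fun k => li2_coef k * z ^ k)).
    replace (plus _ _) with (PSeries li2_coef z); [exact Hs|].
    simpl. rewrite Rmult_0_l. symmetry. apply Rplus_0_r. }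
  apply is_series_Reals in Hs1.
  assert (Hcv : Un_cv (Li2_partial z) (PSeries li2_coef z)).
  { intros eps Heps. destruct (Hs1 eps Heps) as [N HN]. exists N.
    intros n Hn. unfold Li2_partial.
    rewrite (sum_eq _ (fun k => li2_coef (S k) * z ^ S k)); [apply HN, Hn|].
    intros i _. simpl. unfold Rdiv. ring. }
  apply UL_sequence with (Li2_partial z); [|exact Hcv].
  apply (epsilon_spec (inhabits 0) (fun l => Un_cv (Li2_partial z) l)).
  exists (PSeries li2_coef z). exact Hcv.
Qed.

(* -ln(1-x) = sum_{m>=1} x^m/m on (-1,1): both sides vanish at 0 and have
   derivative 1/(1-x), the geometric series. *)
Lemma log_series (x : R) :
  -1 < x < 1 -> PSeries (PS_incr_1 log_quot_coef) x = - ln (1 - x).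
Proof.
  intros Hx.
  set (f := fun t => PSeries (PS_incr_1 log_quot_coef) t + ln (1 - t)).
  assert (Hcoef : forall n, PS_derive (PS_incr_1 log_quot_coef) n = 1).
  { intro n. unfold PS_derive.
    change (PS_incr_1 log_quot_coef (S n)) with (log_quot_coef n).
    unfold log_quot_coef. field. apply not_0_INR. lia. }
  assert (Hd : forall t, -1 < t < 1 -> is_derive f t 0).
  { intros t Ht. unfold f.
    replace 0 with (PSeries (PS_derive (PS_incr_1 log_quot_coef)) t + (-1) / (1 - t)).
    - apply @is_derive_plus.
      + apply is_derive_PSeries, log_coef_radius, Rabs_def1; lra.
      + auto_derive; [lra|]. field. lra.
    - rewrite (PSeries_ext _ (fun _ => 1) t Hcoef).
      assert (Hgeom : PSeries (fun _ => 1) t = / (1 - t)).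
      { unfold PSeries. rewrite <- (is_series_unique _ _ (is_series_geom t ltac:(apply Rabs_def1; lra))).
        apply Series_ext. intro n. ring. }
      rewrite Hgeom. field. lra. }
  pose proof (derive_zero_const f (-1) 1 Hd x 0 Hx ltac:(lra)) as Hx0.
  unfold f in Hx0. rewrite PSeries_0, Rminus_0_r, ln_1 in Hx0.
  simpl in Hx0. change (zero : R) with 0 in Hx0. lra.
Qed.

Lemma log_quot_series (x : R) :
  0 < x < 1 -> PSeries log_quot_coef x = - ln (1 - x) / x.
Proof.
  intros Hx. rewrite <- log_series by lra. rewrite PSeries_incr_1. field. lra.
Qed.

Definition rogers01 (t : R) : R := PSeries li2_coef t + / 2 * ln t * ln (1 - t).

Definition rogers01_deriv (t : R) : R := - / 2 * (ln (1 - t) / t + ln t / (1 - t)).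

Lemma Rogers_rogers01 (t : R) : 0 < t < 1 -> Rogers t = rogers01 t.
Proof.
  intros Ht. unfold Rogers.
  destruct (Req_EM_T t 0); [lra|]. destruct (Req_EM_T t 1); [lra|].
  rewrite Li2_PSeries by (apply Rabs_def1; lra). rewrite Rabs_right by lra.
  reflexivity.
Qed.

(* The derivative of Li2 is -ln(1-t)/t, which yields that of rogers01. *)
Lemma is_derive_rogers01 (t : R) : 0 < t < 1 -> is_derive rogers01 t (rogers01_deriv t).
Proof.
  intros Ht. unfold rogers01.
  assert (Hcoef : forall n, PS_derive li2_coef n = log_quot_coef n).
  { intro n. unfold PS_derive, li2_coef, log_quot_coef.
    change (PS_incr_1 (fun n => / INR (S n) ^ 2) (S n)) with (/ INR (S n) ^ 2).
    field. apply not_0_INR. lia. }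
  replace (rogers01_deriv t) with
    (PSeries (PS_derive li2_coef) t + / 2 * (/ t * ln (1 - t) + ln t * (-1 / (1 - t)))).
  - apply @is_derive_plus.
    + apply is_derive_PSeries, li2_coef_radius, Rabs_def1; lra.
    + auto_derive; [lra|]. replace (1 + - t) with (1 - t) by ring. field. lra.
  - rewrite (PSeries_ext _ _ t Hcoef), log_quot_series by lra.
    unfold rogers01_deriv. field. lra.
Qed.

Lemma continuity_rogers01 (t : R) : 0 < t < 1 -> continuity_pt rogers01 t.
Proof.
  intros Ht. apply ex_derive_continuity_pt. eexists. apply is_derive_rogers01, Ht.
Qed.

Lemma ln_le_sub_1 (z : R) : 0 < z -> ln z <= z - 1.
Proof. intros Hz. pose proof (exp_ineq1_le (ln z)). rewrite exp_ln in H by lra. lra. Qed.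

(* The logarithmic part of rogers01 is O(sqrt t) near 0: using
   -ln t <= 2/sqrt t and -ln(1-t) <= 2t for t <= 1/2. *)
Lemma log_product_bound (t : R) :
  0 < t <= / 2 -> Rabs (/ 2 * ln t * ln (1 - t)) <= 2 * sqrt t.
Proof.
  intros Ht.
  set (s := sqrt t).
  assert (Hs : 0 < s) by (apply sqrt_lt_R0; lra).
  assert (Hss : s * s = t) by (apply sqrt_sqrt; lra).
  set (A := - ln t). set (B := - ln (1 - t)).
  assert (HA0 : 0 <= A).
  { unfold A. pose proof (ln_increasing t 1 ltac:(lra) ltac:(lra)). rewrite ln_1 in H. lra. }
  assert (HB0 : 0 <= B).
  { unfold B. pose proof (ln_increasing (1 - t) 1 ltac:(lra) ltac:(lra)). rewrite ln_1 in H. lra. }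
  assert (HB : B <= 2 * t).
  { unfold B. rewrite <- ln_Rinv by lra.
    pose proof (ln_le_sub_1 (/ (1 - t)) ltac:(apply Rinv_0_lt_compat; lra)).
    assert (/ (1 - t) - 1 <= 2 * t).
    { apply (Rmult_le_reg_r (1 - t)); [lra|]. field_simplify; [nra|lra]. }
    lra. }
  assert (HA : A * s <= 2).
  { assert (E : A = 2 * ln (/ s)).
    { unfold A. rewrite <- Hss, ln_mult, ln_Rinv by lra. ring. }
    pose proof (ln_le_sub_1 (/ s) ltac:(apply Rinv_0_lt_compat; lra)).
    assert (/ s * s = 1) by (field; lra).
    rewrite E. nra. }
  replace (/ 2 * ln t * ln (1 - t)) with (/ 2 * A * B) by (unfold A, B; ring).
  rewrite Rabs_right by nra. rewrite <- Hss in HB. nra.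
Qed.

Lemma rogers01_lim0 (u : nat -> R) :
  (forall n, 0 < u n < 1) -> is_lim_seq u 0 -> is_lim_seq (fun n => rogers01 (u n)) 0.
Proof.
  intros Hu Hl. unfold rogers01.
  rewrite <- (Rplus_0_r 0).
  apply is_lim_seq_plus'.
  - replace 0 with (PSeries li2_coef 0) by (rewrite PSeries_0; reflexivity).
    apply is_lim_seq_continuous; [|exact Hl].
    apply PSeries_continuity, li2_coef_radius. rewrite Rabs_R0. lra.
  - assert (Hsq : is_lim_seq (fun n => 2 * sqrt (u n)) 0).
    { replace 0 with (2 * sqrt 0) by (rewrite sqrt_0; ring).
      apply is_lim_seq_mult'; [apply is_lim_seq_const|].
      apply is_lim_seq_continuous; [|exact Hl].
      apply continuity_pt_sqrt. lra. }
    apply is_lim_seq_le_le_loc with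
      (u := fun n => - (2 * sqrt (u n))) (w := fun n => 2 * sqrt (u n)).
    + apply is_lim_seq_Reals in Hl. destruct (Hl (/ 2)) as [N HN]; [lra|].
      exists N. intros n Hn. specialize (HN n Hn). specialize (Hu n).
      unfold R_dist in HN. rewrite Rminus_0_r, Rabs_right in HN by lra.
      apply Rabs_le_between, log_product_bound. lra.
    + rewrite <- Ropp_0. apply (is_lim_seq_opp _ 0), Hsq.
    + exact Hsq.
Qed.

Lemma rogers01_reflection (x y : R) :
  0 < x < 1 -> 0 < y < 1 -> rogers01 x + rogers01 (1 - x) = rogers01 y + rogers01 (1 - y).
Proof.
  apply (derive_zero_const (fun t => rogers01 t + rogers01 (1 - t)) 0 1).
  intros t Ht.
  replace 0 with (rogers01_deriv t + (-1) * rogers01_deriv (1 - t)).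
  - apply @is_derive_plus; [apply is_derive_rogers01, Ht|].
    apply (is_derive_comp rogers01 (fun t => 1 - t)).
    + apply is_derive_rogers01. lra.
    + auto_derive; [auto|ring].
  - unfold rogers01_deriv. replace (1 - (1 - t)) with t by ring. ring.
Qed.

Lemma div_in_01 (p q : R) : 0 < p -> p < q -> 0 < p / q < 1.
Proof.
  intros Hp Hq. split.
  - apply Rdiv_lt_0_compat; lra.
  - apply (Rmult_lt_reg_r q); [lra|]. field_simplify; lra.
Qed.

(* The last two arguments of the five-term relation R(x)+R(y) = R(xy)+R(u)+R(v). *)
Definition abel_u (y t : R) : R := t * (1 - y) / (1 - t * y).
Definition abel_v (y t : R) : R := y * (1 - t) / (1 - t * y).

Lemma abel_bounds (t y : R) :
  0 < t < 1 -> 0 < y < 1 -> 0 < t * y < 1 /\ 0 < abel_u y t < 1 /\ 0 < abel_v y t < 1.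
Proof. intros Ht Hy. split; [split; nra|]. split; apply div_in_01; nra. Qed.

Definition five_term_defect (y t : R) : R :=
  rogers01 t - rogers01 (t * y) - rogers01 (abel_u y t) - rogers01 (abel_v y t).

(* The logarithmic derivative terms cancel, using
   1 - u = (1-t)/(1-ty) and 1 - v = (1-y)/(1-ty). *)
Lemma is_derive_five_term_defect (y t : R) :
  0 < y < 1 -> 0 < t < 1 -> is_derive (five_term_defect y) t 0.
Proof.
  intros Hy Ht.
  destruct (abel_bounds t y Ht Hy) as [Hty [Hu Hv]].
  assert (Hd : 0 < 1 - t * y) by nra.
  set (du := (1 - y) / (1 - t * y) ^ 2).
  set (dv := - y * (1 - y) / (1 - t * y) ^ 2).
  unfold five_term_defect.
  replace 0 with (rogers01_deriv t - y * rogers01_deriv (t * y)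
                  - du * rogers01_deriv (abel_u y t) - dv * rogers01_deriv (abel_v y t)).
  - apply @is_derive_minus; [apply @is_derive_minus; [apply @is_derive_minus|]|].
    + apply is_derive_rogers01, Ht.
    + apply (is_derive_comp rogers01 (fun t => t * y)); [apply is_derive_rogers01; lra|].
      auto_derive; [auto|ring].
    + apply (is_derive_comp rogers01 (abel_u y)); [apply is_derive_rogers01; lra|].
      unfold abel_u, du. auto_derive; [lra|]. field. lra.
    + apply (is_derive_comp rogers01 (abel_v y)); [apply is_derive_rogers01; lra|].
      unfold abel_v, dv. auto_derive; [lra|]. field. lra.
  - unfold rogers01_deriv.
    replace (1 - abel_u y t) with ((1 - t) / (1 - t * y)) by (unfold abel_u; field; lra).
    replace (1 - abel_v y t) with ((1 - y) / (1 - t * y)) by (unfold abel_v; field; lra).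
    unfold abel_u, abel_v, Rdiv.
    rewrite !ln_mult, !ln_Rinv by (try apply Rinv_0_lt_compat; nra).
    unfold du, dv. field. lra.
Qed.

(* Abel's five-term relation: the defect is constant in t, and tends to
   -rogers01 y as t -> 0+ (u -> 0, v -> y). *)
Lemma rogers01_five_term (x y : R) :
  0 < x < 1 -> 0 < y < 1 ->
  rogers01 x + rogers01 y = rogers01 (x * y) + rogers01 (abel_u y x) + rogers01 (abel_v y x).
Proof.
  intros Hx Hy.
  set (tn := fun n => x ^ S n).
  assert (Htn : forall n, 0 < tn n < 1).
  { intro n. unfold tn. split; [apply pow_lt; lra|apply pow_lt_1_compat; [lra|lia]]. }
  assert (Htn0 : is_lim_seq tn 0).
  { apply (is_lim_seq_incr_1 (fun n => x ^ n)), is_lim_seq_geom.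
    rewrite Rabs_right; lra. }
  assert (Hcont : forall f : R -> R, ex_derive f 0 -> is_lim_seq (fun n => f (tn n)) (f 0)).
  { intros f Hf. apply is_lim_seq_continuous; [|exact Htn0].
    apply ex_derive_continuity_pt, Hf. }
  assert (Hlim : is_lim_seq (fun n => five_term_defect y (tn n)) (0 - 0 - 0 - rogers01 y)).
  { unfold five_term_defect.
    apply is_lim_seq_minus'; [apply is_lim_seq_minus'; [apply is_lim_seq_minus'|]|].
    - apply rogers01_lim0; assumption.
    - apply (rogers01_lim0 (fun n => tn n * y)); [intro n; apply abel_bounds; auto|].
      replace 0 with (0 * y) by ring.
      apply is_lim_seq_mult'; [exact Htn0|apply is_lim_seq_const].
    - apply (rogers01_lim0 (fun n => abel_u y (tn n))); [intro n; apply abel_bounds; auto|].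
      replace 0 with (abel_u y 0) by (unfold abel_u; field).
      apply Hcont. unfold abel_u. auto_derive. lra.
    - replace (rogers01 y) with (rogers01 (abel_v y 0)) by (unfold abel_v; f_equal; field).
      apply is_lim_seq_continuous.
      + replace (abel_v y 0) with y by (unfold abel_v; field). apply continuity_rogers01, Hy.
      + apply Hcont. unfold abel_v. auto_derive. lra. }
  assert (Hconst : forall n, five_term_defect y (tn n) = five_term_defect y x).
  { intro n. apply (derive_zero_const (five_term_defect y) 0 1); auto.
    intros t Ht. apply is_derive_five_term_defect; auto. }
  apply (is_lim_seq_ext _ (fun _ => five_term_defect y x)) in Hlim; [|exact Hconst].
  apply is_lim_seq_unique in Hlim. rewrite Lim_seq_const in Hlim.
  injection Hlim. unfold five_term_defect. lra.
Qed.

Definition xseq (q : R) (m : nat) : R := q ^ m * (1 - q) / (1 - q ^ S m).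
Definition yseq (q : R) (m : nat) : R := (1 - q) / (1 - q ^ S m).

Lemma xseq_yseq_bounds (q : R) (m : nat) :
  0 < q < 1 -> (1 <= m)%nat -> 0 < xseq q m < 1 /\ 0 < yseq q m < 1.
Proof.
  intros Hq Hm.
  assert (HQ : 0 < q ^ m < 1) by (split; [apply pow_lt; lra|apply pow_lt_1_compat; [lra|lia]]).
  unfold xseq, yseq. simpl. split; apply div_in_01; nra.
Qed.

Lemma xseq_yseq_step (q : R) (m : nat) :
  0 < q < 1 -> (1 <= m)%nat ->
  abel_u (yseq q m) (xseq q m) = xseq q (S m) /\ abel_v (yseq q m) (xseq q m) = yseq q (S m).
Proof.
  intros Hq Hm.
  assert (HQ : 0 < q ^ m < 1) by (split; [apply pow_lt; lra|apply pow_lt_1_compat; [lra|lia]]).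
  unfold abel_u, abel_v, xseq, yseq. simpl. set (Q := q ^ m) in *.
  assert (1 - q * Q <> 0) by nra.
  assert (1 - q * (q * Q) <> 0) by nra.
  assert ((1 - q * Q) * (1 - q * Q) - Q * (1 - q) * (1 - q) <> 0) by nra.
  split; field; repeat split; nra.
Qed.

(* The telescoping quantity R(X_m) + R(Y_m); by the five-term relation it drops
   by R(X_m Y_m) from m to m+1. *)
Definition rogers_pair (q : R) (m : nat) : R := rogers01 (xseq q m) + rogers01 (yseq q m).

Lemma rogers_pair_step (q : R) (m : nat) :
  0 < q < 1 -> (1 <= m)%nat ->
  rogers_pair q m = rogers01 (xseq q m * yseq q m) + rogers_pair q (S m).
Proof.
  intros Hq Hm. destruct (xseq_yseq_bounds q m Hq Hm) as [HX HY].
  destruct (xseq_yseq_step q m Hq Hm) as [Hu Hv].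
  unfold rogers_pair. rewrite (rogers01_five_term _ _ HX HY), Hu, Hv. ring.
Qed.

(* Since Y_1 = 1 - X_1, the reflection formula evaluates the first pair. *)
Lemma rogers_pair_1 (q : R) : 0 < q < 1 -> rogers_pair q 1 = rogers01 q + rogers01 (1 - q).
Proof.
  intros Hq. unfold rogers_pair.
  replace (yseq q 1) with (1 - xseq q 1) by (unfold xseq, yseq; simpl; field; nra).
  apply rogers01_reflection; [apply xseq_yseq_bounds; auto|lra].
Qed.

(* X_m -> 0 and Y_m -> 1 - q, hence rogers_pair q m -> rogers01 (1 - q). *)
Lemma rogers_pair_lim (q : R) :
  0 < q < 1 -> is_lim_seq (fun n => rogers_pair q (S n)) (rogers01 (1 - q)).
Proof.
  intros Hq.
  assert (HQ : is_lim_seq (fun n => q ^ S n) 0).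
  { apply (is_lim_seq_incr_1 (fun n => q ^ n)), is_lim_seq_geom. rewrite Rabs_right; lra. }
  assert (Hcont : forall f : R -> R, ex_derive f 0 -> is_lim_seq (fun n => f (q ^ S n)) (f 0)).
  { intros f Hf. apply is_lim_seq_continuous; [|exact HQ]. apply ex_derive_continuity_pt, Hf. }
  unfold rogers_pair. rewrite <- (Rplus_0_l (rogers01 (1 - q))).
  apply is_lim_seq_plus'.
  - apply rogers01_lim0; [intro n; apply xseq_yseq_bounds; auto; lia|].
    replace 0 with ((fun Q => Q * (1 - q) / (1 - q * Q)) 0) by field.
    apply (Hcont (fun Q => Q * (1 - q) / (1 - q * Q))). auto_derive. lra.
  - apply is_lim_seq_continuous; [apply continuity_rogers01; lra|].
    replace (1 - q) with ((fun Q => (1 - q) / (1 - q * Q)) 0) at 1 by field.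
    apply (Hcont (fun Q => (1 - q) / (1 - q * Q))). auto_derive. lra.
Qed.

Lemma sum_telescope (a b : nat -> R) :
  (forall m, (1 <= m)%nat -> a m = b m + a (S m)) ->
  forall n, sum_f_R0 (fun j => b (S j)) n = a 1%nat - a (S (S n)).
Proof.
  intros Hab n. induction n as [|n IH]; simpl sum_f_R0.
  - rewrite (Hab 1%nat) by lia. ring.
  - rewrite IH, (Hab (S (S n))) by lia. ring.
Qed.

Lemma exp_INR_mult (n : nat) (t : R) : exp (INR n * t) = exp t ^ n.
Proof.
  induction n as [|n IH].
  - rewrite Rmult_0_l. apply exp_0.
  - rewrite S_INR, Rmult_plus_distr_r, Rmult_1_l, exp_plus, IH. simpl. ring.
Qed.

Lemma sinh_ratio_xseq_yseq (L : R) (j : nat) :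
  0 < L ->
  sinh (L / 2) ^ 2 / sinh (INR (j + 2) * L / 2) ^ 2
  = xseq (exp (- L)) (S j) * yseq (exp (- L)) (S j).
Proof.
  intros HL.
  set (s := exp (L / 2)).
  assert (Hs : 1 < s) by (unfold s; rewrite <- exp_0; apply exp_increasing; lra).
  assert (Hq : exp (- L) = / (s * s)).
  { unfold s. rewrite <- exp_plus, <- exp_Ropp. f_equal. field. }
  assert (Hk : exp (INR (j + 2) * L / 2) = s * s ^ S j).
  { replace (INR (j + 2) * L / 2) with (INR (S (S j)) * (L / 2))
      by (replace (j + 2)%nat with (S (S j)) by lia; field).
    rewrite exp_INR_mult. reflexivity. }
  unfold xseq, yseq. rewrite Hq.
  unfold sinh. rewrite !exp_Ropp, Hk. fold s.
  rewrite !pow_inv, !Rpow_mult_distr.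
  change (s ^ S (S j)) with (s * s ^ S j).
  set (p := s ^ S j).
  assert (Hp : 1 <= p) by (apply pow_R1_Rle; lra).
  assert (1 < s * p) by nra.
  assert (1 < s * s * (p * p)) by nra.
  assert (1 < s * s * (s * p * (s * p))) by nra.
  field. repeat split; nra.
Qed.

Theorem theorem1 (L : R) (hL : 0 < L) :
  Un_cv
    (fun n => sum_f_R0
       (fun j => Rogers (sinh (L / 2) ^ 2 / sinh (INR (j + 2) * L / 2) ^ 2)) n)
    (Rogers (exp (- L))).
Proof.
  set (q := exp (- L)).
  assert (Hq : 0 < q < 1).
  { unfold q. split; [apply exp_pos|]. rewrite <- exp_0. apply exp_increasing. lra. }
  assert (Hterm : forall j, Rogers (sinh (L / 2) ^ 2 / sinh (INR (j + 2) * L / 2) ^ 2)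
                            = rogers01 (xseq q (S j) * yseq q (S j))).
  { intro j. rewrite sinh_ratio_xseq_yseq by lra. apply Rogers_rogers01.
    destruct (xseq_yseq_bounds q (S j) Hq) as [HX HY]; [lia|]. split; nra. }
  apply is_lim_seq_Reals.
  apply (is_lim_seq_ext (fun n => rogers_pair q 1 - rogers_pair q (S (S n)))).
  { intro n. rewrite (sum_eq _ _ _ (fun j _ => Hterm j)).
    symmetry.
    apply (sum_telescope (rogers_pair q) (fun m => rogers01 (xseq q m * yseq q m))).
    intros m Hm.
    apply rogers_pair_step; assumption. }
  replace (Rogers q) with (rogers_pair q 1 - rogers01 (1 - q))
    by (rewrite rogers_pair_1, Rogers_rogers01 by assumption; ring).
  apply is_lim_seq_minus'; [apply is_lim_seq_const|].
  apply (is_lim_seq_incr_1 (fun n => rogers_pair q (S n))), rogers_pair_lim, Hq.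
Qed.
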